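(* Consider binary classification of real data points $x \in \mathbb{R}$ drawn from a linearly separable data distribution $p_d$, where the class with label $y=-1$ has class-conditional mean $\mu_1$ and the class with label $y=+1$ has class-conditional mean $\mu_2$, with $\mu_1<\mu_2$, and let $\omega^\star = \frac{\mu_1+\mu_2}{2}$ be the max-margin decision boundary. Run UDP as follows, starting from some $\omega_0 \in \mathbb{R}$ with a fixed step size $\eta \in (0,1)$. At iteration $n$, given the current boundary $\omega_n$: sample $x_n^{(1)} \sim p_d(x \mid y=-1)$ and $x_n^{(2)} \sim p_d(x\mid y=+1)$; form the uncertainty-driven perturbations $\tilde x_n^{(1)} = \beta_n x_n^{(1)} + (1-\beta_n)\omega_n$ and $\tilde x_n^{(2)} = \gamma_n x_n^{(2)} + (1-\gamma_n)\omega_n$, where $\beta_n,\gamma_n \in (0,1)$ are random with $\mathbb{E}[\beta_n]=\mathbb{E}[\gamma_n]=\tfrac12$; an oracle returns $\tilde\omega_n = \alpha_n \tilde x_n^{(1)} + (1-\alpha_n)\tilde x_n^{(2)}$ with $\alpha_n \sim \mathcal{U}(0,1)$ (so $\mathbb{E}[\alpha_n]=\tfrac12$), where $\alpha_n,\beta_n,\gamma_n,x_n^{(1)},x_n^{(2)}$ are mutually independent and independent of $\omega_n$; and update $\omega_{n+1} = \omega_n + \eta(\tilde\omega_n - \omega_n)$. Then, in expectation, the iterate moves towards the max-margin boundary: $\mathbb{E}[\omega_{n+1}\mid\omega_n]$ lies on the segment between $\omega_n$ and $\omega^\star$.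
   Context: UDP (uncertainty-driven perturbations) perturbs each training point by moving it toward the current decision boundary, which is where the model's uncertainty is maximal; in this one-dimensional model the perturbed point is a random convex combination of the original point and the current boundary $\omega_n$. The ''oracle'' is a weak abstraction of the optimizer: given two (perturbed) data points of opposite classes, it returns a point lying between them, chosen uniformly at random on the segment. *)

From HB Require Import structures.
From mathcomp Require Import all_boot all_order all_algebra.
From mathcomp Require Import all_classical all_reals all_analysis.
From mathcomp Require Import probability uniform_distribution.
Set Implicit Arguments. Unset Strict Implicit. Unset Printing Implicit Defensive.
Import Order.TTheory GRing.Theory Num.Theory.
Local Open Scope classical_set_scope.
Local Open Scope ring_scope.

(* Taking B i = setT for the indices outside a subfamily
   yields the product rule for every subfamily. *)
Definition mutually_independent {d} {T : measurableType d} {R : realType}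
  (P : probability T R) (I : finType) (X : I -> T -> R) : Prop :=
  forall B : I -> set R, (forall i, measurable (B i)) ->
    P (\bigcap_(i in [set: I]) (X i @^-1` B i)) =
    (\prod_(i : I) P (X i @^-1` B i))%E.

Definition udp_step {R : realType} (eta w a b c x1 x2 : R) : R :=
  let xt1 := b * x1 + (1 - b) * w in
  let xt2 := c * x2 + (1 - c) * w in
  let wt := a * xt1 + (1 - a) * xt2 in
  w + eta * (wt - w).

(* The oracle output
     alpha (beta x1 + (1 - beta) w) + (1 - alpha) (gamma x2 + (1 - gamma) w)
   is a sum of products of independent factors, so its expectation
   factorises: each perturbed point has mean (mu_i + w) / 2 and alpha has
   mean 1/2, hence the oracle output has mean (w + (mu1 + mu2) / 2) / 2 and
   E[omega_{n+1}] = (1 - eta/2) w + (eta/2) (mu1 + mu2) / 2.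
   The factorisation E[f(U) g(V) h(W)] = E[f(U)] E[g(V)] E[h(W)] for
   independent U, V, W is obtained one variable at a time: an identity
   between the integrals of 1_A(X) phi for all Borel A extends to f(X) phi
   for every nonnegative measurable f, by simple-function approximation and
   monotone convergence. The weights are clamped to [0, 1], which changes
   them only on a null set. *)

From HB Require Import structures.
From mathcomp Require Import all_boot all_order all_algebra.
From mathcomp Require Import all_classical all_reals all_analysis.
From mathcomp Require Import probability uniform_distribution.
From mathcomp Require Import measurable_realfun ring lra.
Set Implicit Arguments.
Unset Strict Implicit.
Unset Printing Implicit Defensive.
Import Order.TTheory GRing.Theory Num.Theory.
Local Open Scope classical_set_scope.
Local Open Scope ring_scope.
Import HBNNSimple.

Section integral_comp_weight.
Local Open Scope ereal_scope.
Context d (T : measurableType d) (R : realType) (mu : {measure set T -> \bar R}).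
Variable X : T -> R.
Hypothesis mX : measurable_fun setT X.

Let measurable_indic_comp (A : set R) : measurable A ->
  measurable_fun setT (fun x => \1_A (X x) : R).
Proof. by move=> mA; exact: measurableT_comp (measurable_indic mA) mX. Qed.

Lemma integral_indic_comp (A : set R) : measurable A ->
  \int[mu]_x (\1_A (X x))%:E = mu (X @^-1` A).
Proof.
move=> mA; rewrite -[X @^-1` A]setIT -integral_indic//.
by rewrite -[X @^-1` A]setTI; exact: mX.
Qed.

Lemma integral_nnsfun_comp_weight (h : {nnsfun R >-> R}) (phi : T -> R) :
    measurable_fun setT phi -> (forall x, 0 <= phi x)%R ->
  \int[mu]_x (h (X x) * phi x)%:E =
  \sum_(r \in range h) r%:E * \int[mu]_x (\1_(h @^-1` [set r]) (X x) * phi x)%:E.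
Proof.
move=> mphi phi0.
under eq_integral => x _.
  rewrite (fimfunE h (X x)) EFinM -fsumEFin// ge0_mule_fsuml; last first.
    by move=> r; rewrite EFinM nnfun_muleindic_ge0.
  over.
rewrite ge0_integral_fsum//; last 2 first.
- move=> r; apply: emeasurable_funM; apply/measurable_EFinP => //.
  by apply: measurable_funM => //; exact: measurable_indic_comp.
- by move=> r x _; rewrite EFinM mule_ge0 ?nnfun_muleindic_ge0// lee_fin.
apply: eq_fsbigr => r /set_mem [t _ <-].
rewrite -ge0_integralZl//; last 3 first.
- apply/measurable_EFinP; apply: measurable_funM => //.
  exact: measurable_indic_comp.
- by move=> x _; rewrite lee_fin mulr_ge0.
- by rewrite lee_fin fun_ge0.
by apply: eq_integral => x _; rewrite -!EFinM mulrA.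
Qed.

Lemma eq_integral_comp_weight (phi psi : T -> R) :
    measurable_fun setT phi -> (forall x, 0 <= phi x)%R ->
    measurable_fun setT psi -> (forall x, 0 <= psi x)%R ->
    (forall A, measurable A -> \int[mu]_x (\1_A (X x) * phi x)%:E =
                               \int[mu]_x (\1_A (X x) * psi x)%:E) ->
  forall f : R -> R, measurable_fun setT f -> (forall r, 0 <= f r)%R ->
  \int[mu]_x (f (X x) * phi x)%:E = \int[mu]_x (f (X x) * psi x)%:E.
Proof.
move=> mphi phi0 mpsi psi0 phi_psi f mf f0.
have mfE : measurable_fun [set: R] (EFin \o f) by exact/measurable_EFinP.
pose h := nnsfun_approx measurableT mfE.
have approxE (g : T -> R) : measurable_fun setT g -> (forall x, 0 <= g x)%R ->
    \int[mu]_x (f (X x) * g x)%:E = limn (fun n => \int[mu]_x (h n (X x) * g x)%:E).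
  move=> mg g0; rewrite -monotone_convergence//.
  - apply: eq_integral => x _; apply/esym/cvg_lim => //.
    rewrite EFinM; under eq_fun do rewrite EFinM.
    by apply: cvgeMr => //; apply: cvg_nnsfun_approx => // ? _; rewrite lee_fin.
  - move=> n; apply/measurable_EFinP; apply: measurable_funM => //.
    exact: measurableT_comp.
  - by move=> n x _; rewrite lee_fin mulr_ge0.
  - move=> x _ m n mn; rewrite lee_fin ler_wpM2r//.
    exact/lefP/nd_nnsfun_approx.
rewrite (approxE _ mphi phi0) (approxE _ mpsi psi0); congr (limn _).
apply/funext => n; rewrite !integral_nnsfun_comp_weight//.
by apply: eq_fsbigr => r _; rewrite phi_psi.
Qed.

Lemma integral_comp_weight_indep (phi : T -> R) (c : \bar R) :
    measurable_fun setT phi -> (forall x, 0 <= phi x)%R ->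
    c \is a fin_num -> 0 <= c ->
    (forall A, measurable A ->
       \int[mu]_x (\1_A (X x) * phi x)%:E = mu (X @^-1` A) * c) ->
  forall f : R -> R, measurable_fun setT f -> (forall r, 0 <= f r)%R ->
  \int[mu]_x (f (X x) * phi x)%:E = \int[mu]_x (f (X x))%:E * c.
Proof.
move=> mphi phi0 /fineK <-; set k := fine c; rewrite lee_fin => k0 phi_indep f mf f0.
have integralZk (g : R -> R) : measurable_fun setT g -> (forall r, 0 <= g r)%R ->
    \int[mu]_x (g (X x) * k)%:E = \int[mu]_x (g (X x))%:E * k%:E.
  move=> mg g0; under eq_integral do rewrite EFinM.
  rewrite ge0_integralZr// => [|x _]; last by rewrite lee_fin.
  exact/measurable_EFinP/measurableT_comp.
rewrite -integralZk//.
apply: (@eq_integral_comp_weight phi (fun=> k)) => // A mA.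
by rewrite phi_indep// integralZk ?integral_indic_comp.
Qed.

End integral_comp_weight.

Lemma integrable_ge0_lty d (T : measurableType d) (R : realType)
    (mu : {measure set T -> \bar R}) (f : T -> R) :
    measurable_fun setT f -> (forall x, 0 <= f x) ->
  (\int[mu]_x (f x)%:E < +oo)%E -> mu.-integrable setT (EFin \o f).
Proof.
move=> mf f0 f_lty; apply/integrableP; split; first exact/measurable_EFinP.
by under eq_integral do rewrite /= ger0_norm//.
Qed.

Lemma integral_onem d (T : measurableType d) (R : realType) (P : probability T R)
    (Y : T -> R) : P.-integrable setT (EFin \o Y) ->
  (\int[P]_x (1 - Y x)%:E = 1 - \int[P]_x (Y x)%:E)%E.
Proof.
move=> iY; under eq_integral do rewrite EFinB.
rewrite integralB_EFin//; last exact: finite_measure_integrable_cst.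
by rewrite integral_cst//= probability_setT mul1e.
Qed.

Section independent_triple.
Local Open Scope ereal_scope.
Context d (T : measurableType d) (R : realType) (P : probability T R).
Variables U V W : T -> R.
Hypotheses (mU : measurable_fun setT U) (mV : measurable_fun setT V)
  (mW : measurable_fun setT W).
Hypothesis UVW_indep : forall A B C : set R,
  measurable A -> measurable B -> measurable C ->
  P (U @^-1` A `&` V @^-1` B `&` W @^-1` C) =
  P (U @^-1` A) * P (V @^-1` B) * P (W @^-1` C).

Let mpreimage (Z : T -> R) (A : set R) :
  measurable_fun setT Z -> measurable A -> measurable (Z @^-1` A).
Proof. by move=> mZ mA; rewrite -[Z @^-1` A]setTI; exact: mZ. Qed.

Let fin_num_integral (f : R -> R) (Z : T -> R) : (forall r, 0 <= f r)%R ->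
  \int[P]_x (f (Z x))%:E < +oo -> \int[P]_x (f (Z x))%:E \is a fin_num.
Proof.
by move=> f0 fZ; rewrite ge0_fin_numE// integral_ge0// => x _; rewrite lee_fin.
Qed.

Let integral_comp_ge0 (f : R -> R) (Z : T -> R) : (forall r, 0 <= f r)%R ->
  0 <= \int[P]_x (f (Z x))%:E.
Proof. by move=> f0; rewrite integral_ge0// => x _; rewrite lee_fin. Qed.

Lemma integral_indic3_indep A B C : measurable A -> measurable B -> measurable C ->
  \int[P]_x (\1_A (U x) * \1_B (V x) * \1_C (W x))%:E =
  P (U @^-1` A) * P (V @^-1` B) * P (W @^-1` C).
Proof.
move=> mA mB mC; rewrite -UVW_indep// -[_ `&` _]setIT -integral_indic; last 2 first.
- by [].
- by apply: measurableI; [apply: measurableI|]; exact: mpreimage.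
by apply: eq_integral => x _; rewrite !indicI.
Qed.

Lemma ge0_integral_mul_indic2_indep (f : R -> R) B C :
    measurable B -> measurable C ->
    measurable_fun setT f -> (forall r, 0 <= f r)%R ->
  \int[P]_x (f (U x) * \1_B (V x) * \1_C (W x))%:E =
  \int[P]_x (f (U x))%:E * P (V @^-1` B) * P (W @^-1` C).
Proof.
move=> mB mC mf f0; rewrite -muleA.
under eq_integral do rewrite -mulrA.
apply: integral_comp_weight_indep => //.
- by apply: measurable_funM; apply: measurableT_comp => //; exact: measurable_indic.
- by apply: fin_numM; apply: fin_num_measure; exact: mpreimage.
- by rewrite mule_ge0.
- move=> A mA; under eq_integral do rewrite mulrA.
  by rewrite integral_indic3_indep// muleA.
Qed.

Lemma ge0_integral_mul2_indic_indep (f g : R -> R) C : measurable C ->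
    measurable_fun setT f -> (forall r, 0 <= f r)%R ->
    \int[P]_x (f (U x))%:E < +oo ->
    measurable_fun setT g -> (forall r, 0 <= g r)%R ->
  \int[P]_x (f (U x) * g (V x) * \1_C (W x))%:E =
  \int[P]_x (f (U x))%:E * \int[P]_x (g (V x))%:E * P (W @^-1` C).
Proof.
move=> mC mf f0 fU mg g0.
transitivity (\int[P]_x (g (V x) * (f (U x) * \1_C (W x)))%:E).
  by apply: eq_integral => x _; congr EFin; ring.
rewrite (@integral_comp_weight_indep _ _ _ P V mV _
  (\int[P]_x (f (U x))%:E * P (W @^-1` C)))//.
- by rewrite muleCA muleA.
- apply: measurable_funM; apply: measurableT_comp => //; exact: measurable_indic.
- by move=> x; rewrite mulr_ge0// indicE.
- apply: fin_numM; first exact: fin_num_integral.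
  by apply: fin_num_measure; exact: mpreimage.
- by apply: mule_ge0 => //; exact: integral_comp_ge0.
- move=> B mB.
  transitivity (\int[P]_x (f (U x) * \1_B (V x) * \1_C (W x))%:E).
    by apply: eq_integral => x _; congr EFin; ring.
  by rewrite ge0_integral_mul_indic2_indep// muleCA muleA.
Qed.

Lemma ge0_integral_mul3_indep (f g h : R -> R) :
    measurable_fun setT f -> (forall r, 0 <= f r)%R ->
    \int[P]_x (f (U x))%:E < +oo ->
    measurable_fun setT g -> (forall r, 0 <= g r)%R ->
    \int[P]_x (g (V x))%:E < +oo ->
    measurable_fun setT h -> (forall r, 0 <= h r)%R ->
  \int[P]_x (f (U x) * g (V x) * h (W x))%:E =
  \int[P]_x (f (U x))%:E * \int[P]_x (g (V x))%:E * \int[P]_x (h (W x))%:E.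
Proof.
move=> mf f0 fU mg g0 gV mh h0.
transitivity (\int[P]_x (h (W x) * (f (U x) * g (V x)))%:E).
  by apply: eq_integral => x _; congr EFin; ring.
rewrite (@integral_comp_weight_indep _ _ _ P W mW _
  (\int[P]_x (f (U x))%:E * \int[P]_x (g (V x))%:E))//.
- by rewrite muleC.
- by apply: measurable_funM; exact: measurableT_comp.
- by move=> x; rewrite mulr_ge0.
- by apply: fin_numM; exact: fin_num_integral.
- by apply: mule_ge0; exact: integral_comp_ge0.
- move=> C mC.
  transitivity (\int[P]_x (f (U x) * g (V x) * \1_C (W x))%:E).
    by apply: eq_integral => x _; congr EFin; ring.
  by rewrite ge0_integral_mul2_indic_indep// muleC.
Qed.

Lemma integrable_mul3_indep (f g h : R -> R) :
    measurable_fun setT f -> (forall r, 0 <= f r)%R ->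
    \int[P]_x (f (U x))%:E < +oo ->
    measurable_fun setT g -> (forall r, 0 <= g r)%R ->
    \int[P]_x (g (V x))%:E < +oo ->
    measurable_fun setT h -> P.-integrable setT (EFin \o (h \o W)) ->
  P.-integrable setT (EFin \o (fun x => f (U x) * g (V x) * h (W x))%R).
Proof.
move=> mf f0 fU mg g0 gV mh /integrableP[_ hW]; apply/integrableP; split.
  apply/measurable_EFinP.
  by apply: measurable_funM; [apply: measurable_funM|]; exact: measurableT_comp.
under eq_integral do rewrite /= normrM ger0_norm ?mulr_ge0//.
rewrite (@ge0_integral_mul3_indep f g (fun r => `|h r|)%R)//.
- apply: lte_mul_pinfty => //.
  + by apply: mule_ge0; exact: integral_comp_ge0.
  + by apply: fin_numM; exact: fin_num_integral.
- exact: measurableT_comp.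
Qed.

Lemma integral_mul3_indep (f g h : R -> R) :
    measurable_fun setT f -> (forall r, 0 <= f r)%R ->
    \int[P]_x (f (U x))%:E < +oo ->
    measurable_fun setT g -> (forall r, 0 <= g r)%R ->
    \int[P]_x (g (V x))%:E < +oo ->
    measurable_fun setT h -> P.-integrable setT (EFin \o (h \o W)) ->
  \int[P]_x (f (U x) * g (V x) * h (W x))%:E =
  \int[P]_x (f (U x))%:E * \int[P]_x (g (V x))%:E * \int[P]_x (h (W x))%:E.
Proof.
move=> mf f0 fU mg g0 gV mh ihW.
have ihW_pos := integrable_funrpos measurableT ihW.
have ihW_neg := integrable_funrneg measurableT ihW.
have hE r : h r = (h^\+ r - h^\- r)%R by rewrite -{1}(funrposBneg h).
have integralE : \int[P]_x (h (W x))%:E =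
    \int[P]_x (h^\+ (W x))%:E - \int[P]_x (h^\- (W x))%:E.
  by rewrite -integralB_EFin//; apply: eq_integral => x _; rewrite -EFinB -hE.
transitivity (\int[P]_x ((f (U x) * g (V x) * h^\+ (W x))%:E -
                         (f (U x) * g (V x) * h^\- (W x))%:E)).
  by apply: eq_integral => x _; rewrite -EFinB -mulrBr -hE.
rewrite integralB_EFin//; last 2 first.
- by apply: integrable_mul3_indep => //; exact: measurable_funrpos.
- by apply: integrable_mul3_indep => //; exact: measurable_funrneg.
rewrite !ge0_integral_mul3_indep//; [|exact: measurable_funrneg|exact: measurable_funrpos].
rewrite integralE -muleBr//; last by rewrite fin_num_adde_defr// integrable_fin_num.
by apply: fin_numM; exact: fin_num_integral.
Qed.

(* The factor [1] is [h (W x)] for [h := fun=> 1], so that both terms have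
   the shape handled by [integral_mul3_indep]. *)
Let mul_perturbedE (f g : R -> R) (w : R) x :
  (f (U x) * (g (V x) * W x + (1 - g (V x)) * w))%:E =
  (f (U x) * g (V x) * W x)%:E + w%:E * (f (U x) * (1 - g (V x)) * 1)%:E.
Proof. by rewrite -EFinM -EFinD; congr EFin; ring. Qed.

Let onem_comp {g : R -> R} {b : R} :
    measurable_fun setT g -> (forall r, 0 <= g r <= 1)%R ->
    \int[P]_x (g (V x))%:E = b%:E ->
  [/\ forall r, (0 <= g r)%R, measurable_fun setT (fun r => 1 - g r)%R,
      forall r, (0 <= 1 - g r)%R & \int[P]_x (1 - g (V x))%:E = (1 - b)%:E].
Proof.
move=> mg g01 gV; have g0 r : (0 <= g r)%R by case/andP: (g01 r).
split=> // [|r|]; first exact: measurable_funB.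
  by rewrite subr_ge0; case/andP: (g01 r).
rewrite integral_onem ?gV//; apply: integrable_ge0_lty => //.
- exact: measurableT_comp.
- by rewrite gV ltry.
Qed.

Let integrable1 : P.-integrable setT (EFin \o ((fun=> 1%R) \o W)).
Proof. exact: finite_measure_integrable_cst. Qed.

Let integrable_perturbed_terms (f g : R -> R) (a b : R) :
    measurable_fun setT f -> (forall r, 0 <= f r)%R ->
    \int[P]_x (f (U x))%:E = a%:E ->
    measurable_fun setT g -> (forall r, 0 <= g r <= 1)%R ->
    \int[P]_x (g (V x))%:E = b%:E ->
    P.-integrable setT (EFin \o W) ->
  P.-integrable setT (fun x => (f (U x) * g (V x) * W x)%:E) /\
  P.-integrable setT (fun x => (f (U x) * (1 - g (V x)) * 1)%:E).
Proof.
move=> mf f0 fU mg g01 gV iW.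
have [g0 monem_g onem_g0 onem_gV] := onem_comp mg g01 gV.
split; first by apply: (@integrable_mul3_indep f g id) => //; rewrite ?fU ?gV ltry.
by apply: (@integrable_mul3_indep f (fun r => 1 - g r)%R (fun=> 1%R));
  rewrite ?fU ?onem_gV ?ltry.
Qed.

Lemma integrable_mul_perturbed_indep (f g : R -> R) (a b w : R) :
    measurable_fun setT f -> (forall r, 0 <= f r)%R ->
    \int[P]_x (f (U x))%:E = a%:E ->
    measurable_fun setT g -> (forall r, 0 <= g r <= 1)%R ->
    \int[P]_x (g (V x))%:E = b%:E ->
    P.-integrable setT (EFin \o W) ->
  P.-integrable setT
    (EFin \o (fun x => f (U x) * (g (V x) * W x + (1 - g (V x)) * w))%R).
Proof.
move=> mf f0 fU mg g01 gV iW.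
have [i1 i2] := integrable_perturbed_terms mf f0 fU mg g01 gV iW.
refine (eq_integrable measurableT _ _
  (fun x _ => esym (mul_perturbedE f g w x)) _).
by apply: integrableD => //; exact: integrableZl.
Qed.

Lemma integral_mul_perturbed_indep (f g : R -> R) (a b m w : R) :
    measurable_fun setT f -> (forall r, 0 <= f r)%R ->
    \int[P]_x (f (U x))%:E = a%:E ->
    measurable_fun setT g -> (forall r, 0 <= g r <= 1)%R ->
    \int[P]_x (g (V x))%:E = b%:E ->
    P.-integrable setT (EFin \o W) -> \int[P]_x (W x)%:E = m%:E ->
  \int[P]_x (f (U x) * (g (V x) * W x + (1 - g (V x)) * w))%:E =
  (a * (b * m + (1 - b) * w))%:E.
Proof.
move=> mf f0 fU mg g01 gV iW Wm.
have [g0 monem_g onem_g0 onem_gV] := onem_comp mg g01 gV.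
have [i1 i2] := integrable_perturbed_terms mf f0 fU mg g01 gV iW.
have fU_lty : \int[P]_x (f (U x))%:E < +oo by rewrite fU ltry.
under eq_integral do rewrite mul_perturbedE.
rewrite integralD//; last exact: integrableZl.
rewrite integralZl// (@integral_mul3_indep f g id) ?gV ?ltry//.
rewrite (@integral_mul3_indep f (fun r => 1 - g r)%R (fun=> 1%R)) ?onem_gV ?ltry//.
rewrite fU Wm integral_cst//= probability_setT.
by rewrite -!EFinM -EFinD; congr EFin; ring.
Qed.

End independent_triple.

Lemma mutually_independent3 d (T : measurableType d) (R : realType)
    (P : probability T R) (I : finType) (X : I -> T -> R) :
    mutually_independent P X -> forall i j k : I, i != j -> i != k -> j != k ->
  forall A B C : set R, measurable A -> measurable B -> measurable C ->
  P (X i @^-1` A `&` X j @^-1` B `&` X k @^-1` C) =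
  (P (X i @^-1` A) * P (X j @^-1` B) * P (X k @^-1` C))%E.
Proof.
move=> indep i j k ij ik jk A B C mA mB mC.
pose S l := if l == i then A else if l == j then B else if l == k then C else setT.
have mS l : measurable (S l) by rewrite /S; repeat case: ifP => _.
have ji : j != i by rewrite eq_sym.
have ki : k != i by rewrite eq_sym.
have kj : k != j by rewrite eq_sym.
have [Si Sj Sk] : [/\ S i = A, S j = B & S k = C].
  by rewrite /S !eqxx (negbTE ji) (negbTE ki) (negbTE kj).
have := indep S mS.
rewrite (bigD1 i)// (bigD1 j) ?ji//= (bigD1 k) /= ?ki ?kj//.
rewrite big1 ?mule1 ?muleA ?Si ?Sj ?Sk; last first.
  move=> l /andP[/andP[li lj] lk].
  by rewrite /S (negbTE li) (negbTE lj) (negbTE lk) preimage_setT probability_setT.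
move=> <-; congr (P _); apply/seteqP; split=> [x [[xA xB] xC] l _|x xS].
- by rewrite /S; case: ifP => [/eqP-> //|_]; case: ifP => [/eqP-> //|_]; case: ifP => [/eqP-> //|].
- by rewrite -Si -Sj -Sk; split; [split|]; exact: xS.
Qed.

Definition clamp01 {R : realType} (r : R) : R := Num.min (Num.max r 0) 1.

Section clamp01.
Context {R : realType}.
Implicit Types r : R.

Lemma clamp01_ge0 r : 0 <= clamp01 r.
Proof. by rewrite /clamp01 le_min ler01 le_max lexx orbT. Qed.

Lemma clamp01_le1 r : clamp01 r <= 1.
Proof. by rewrite /clamp01 ge_min lexx orbT. Qed.

Lemma clamp01_itv r : 0 <= clamp01 r <= 1.
Proof. by rewrite clamp01_ge0 clamp01_le1. Qed.

Lemma onem_clamp01_itv r : 0 <= 1 - clamp01 r <= 1.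
Proof. by rewrite subr_ge0 clamp01_le1 lerBlDr lerDl clamp01_ge0. Qed.

Lemma clamp01_id r : 0 <= r <= 1 -> clamp01 r = r.
Proof. by case/andP=> r0 r1; rewrite /clamp01 (max_idPl r0) (min_idPl r1). Qed.

Lemma measurable_clamp01 : measurable_fun setT (@clamp01 R).
Proof. by apply: measurable_minr => //; exact: measurable_maxr. Qed.

End clamp01.

Lemma integral_clamp01_ae d (T : measurableType d) (R : realType)
    (mu : {measure set T -> \bar R}) (Y : T -> R) : measurable_fun setT Y ->
  {ae mu, forall x, 0 <= Y x <= 1} ->
  (\int[mu]_x (clamp01 (Y x))%:E = \int[mu]_x (Y x)%:E)%E.
Proof.
move=> mY Y01; apply: ae_eq_integral => //.
- by apply/measurable_EFinP; exact: measurableT_comp measurable_clamp01 mY.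
- exact/measurable_EFinP.
- by apply: filterS Y01 => x /clamp01_id ->.
Qed.

Section uniform01.
Local Open Scope ereal_scope.
Context d (T : measurableType d) (R : realType) (P : probability T R).
Variable X : {RV P >-> R}.
Hypothesis X_uniform : forall A, measurable A ->
  distribution P X A = uniform_prob ltr01 A.

Lemma ge0_integral_uniform01 (f : R -> R) :
    measurable_fun setT f -> (forall r, 0 <= f r)%R ->
  \int[P]_x (f (X x))%:E = \int[lebesgue_measure]_(r in `[0%R, 1%R]) (f r)%:E.
Proof.
move=> mf f0.
have mX : measurable_fun setT (X : T -> measurableTypeR R).
  by move=> mT B mB; exact: (measurable_funP X) mT B mB.
have mfE : measurable_fun setT (EFin \o f : measurableTypeR R -> \bar R).
  by move=> mT B mB; exact: (measurable_EFinP _ _).2 mf mT B mB.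
have := ge0_integral_pushforward mX P measurableT mfE (fun r _ => f0 r).
rewrite preimage_setT => <-.
transitivity (\int[uniform_prob ltr01]_r (EFin \o f) r).
  by apply: eq_measure_integral => A mA _; exact: X_uniform.
by rewrite integral_uniform//= subr0 invr1 mul1e.
Qed.

Lemma uniform01_ae : {ae P, forall x, 0 <= X x <= 1}%R.
Proof.
exists (X @^-1` (~` `[0%R, 1%R])); split => [||x /= x01 /=].
- by rewrite -[_ @^-1` _]setTI; apply: measurable_funP => //; exact: measurableC.
- have := X_uniform (measurableC (measurable_itv `[0%R, 1%R])).
  rewrite /distribution /pushforward => ->.
  by rewrite /uniform_prob integral_uniform_pdf setICl integral_set0.
- by apply: x01; rewrite in_itv.
Qed.

Lemma integral_clamp01_uniform01 : \int[P]_x (clamp01 (X x))%:E = (1 / 2)%:E.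
Proof.
rewrite ge0_integral_uniform01; [|exact: measurable_clamp01|exact: clamp01_ge0].
transitivity (\int[lebesgue_measure]_(r in `[0%R, 1%R]) (r : R)%:E).
  by apply: eq_integral => r /[!inE] r01; rewrite clamp01_id.
have := @beta_distribution.EFin_beta_fun R 2 1.
rewrite beta_distribution.beta_fun_sym beta_distribution.beta_fun1Sn div1r => ->.
rewrite integral_mkcond; apply: eq_integral => r _ /=.
by rewrite /patch; case: ifP => // _; rewrite /beta_distribution.XMonemX expr1 expr0 mulr1.
Qed.

End uniform01.

Lemma udp_stepE {R : realType} (eta w a b c x1 x2 : R) :
  udp_step eta w a b c x1 x2 =
  (1 - eta) * w + eta * (a * (b * x1 + (1 - b) * w) + (1 - a) * (c * x2 + (1 - c) * w)).
Proof. by rewrite /udp_step; ring. Qed.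

Lemma measurable_udp_step d (T : measurableType d) (R : realType) (eta w : R)
    (a b c x1 x2 : T -> R) :
    measurable_fun setT a -> measurable_fun setT b -> measurable_fun setT c ->
    measurable_fun setT x1 -> measurable_fun setT x2 ->
  measurable_fun setT (fun s => udp_step eta w (a s) (b s) (c s) (x1 s) (x2 s)).
Proof.
move=> ma mb mc mx1 mx2; rewrite /udp_step.
by repeat first [apply: measurable_funD | apply: measurable_funB |
  apply: measurable_funM | apply: measurable_funN | exact: measurable_cst].
Qed.

Section udp_step_mean.
Local Open Scope ereal_scope.
Context d (T : measurableType d) (R : realType) (P : probability T R).
Variables (alpha beta gamma x1 x2 : T -> R) (mu1 mu2 eta w : R).
Hypotheses (malpha : measurable_fun setT alpha) (mbeta : measurable_fun setT beta)
  (mgamma : measurable_fun setT gamma) (mx1 : measurable_fun setT x1)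
  (mx2 : measurable_fun setT x2).
Hypotheses (alpha_beta_x1 : forall A B C : set R,
  measurable A -> measurable B -> measurable C ->
  P (alpha @^-1` A `&` beta @^-1` B `&` x1 @^-1` C) =
  P (alpha @^-1` A) * P (beta @^-1` B) * P (x1 @^-1` C))
  (alpha_gamma_x2 : forall A B C : set R,
  measurable A -> measurable B -> measurable C ->
  P (alpha @^-1` A `&` gamma @^-1` B `&` x2 @^-1` C) =
  P (alpha @^-1` A) * P (gamma @^-1` B) * P (x2 @^-1` C)).
Hypotheses (ix1 : P.-integrable setT (EFin \o x1))
  (ix2 : P.-integrable setT (EFin \o x2))
  (Ex1 : \int[P]_x (x1 x)%:E = mu1%:E) (Ex2 : \int[P]_x (x2 x)%:E = mu2%:E).
Hypotheses (Ealpha : \int[P]_x (clamp01 (alpha x))%:E = (1 / 2)%:E)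
  (Ebeta : \int[P]_x (clamp01 (beta x))%:E = (1 / 2)%:E)
  (Egamma : \int[P]_x (clamp01 (gamma x))%:E = (1 / 2)%:E).

Lemma integral_udp_step_clamp01 :
  \int[P]_x (udp_step eta w (clamp01 (alpha x)) (clamp01 (beta x))
                     (clamp01 (gamma x)) (x1 x) (x2 x))%:E =
  ((1 - eta / 2) * w + eta / 2 * ((mu1 + mu2) / 2))%:E.
Proof.
have mclamp := @measurable_clamp01 R.
have monem_clamp : measurable_fun setT (fun r : R => 1 - clamp01 r)%R.
  exact: measurable_funB.
have onem_clamp0 r : (0 <= 1 - clamp01 r :> R)%R by case/andP: (onem_clamp01_itv r).
have Eonem_alpha : \int[P]_x (1 - clamp01 (alpha x))%:E = (1 / 2)%:E.
  rewrite integral_onem ?Ealpha; first by rewrite -EFinB; congr EFin; field.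
  apply: integrable_ge0_lty; first exact: measurableT_comp.
    by move=> x; exact: clamp01_ge0.
  by rewrite Ealpha ltry.
have i1 := integrable_mul_perturbed_indep malpha mbeta mx1 alpha_beta_x1 w
  mclamp clamp01_ge0 Ealpha mclamp clamp01_itv Ebeta ix1.
have i2 := integrable_mul_perturbed_indep malpha mgamma mx2 alpha_gamma_x2 w
  monem_clamp onem_clamp0 Eonem_alpha mclamp clamp01_itv Egamma ix2.
pose half1 x := (clamp01 (alpha x) *
  (clamp01 (beta x) * x1 x + (1 - clamp01 (beta x)) * w))%R.
pose half2 x := ((1 - clamp01 (alpha x)) *
  (clamp01 (gamma x) * x2 x + (1 - clamp01 (gamma x)) * w))%R.
transitivity (\int[P]_x (((1 - eta) * w)%:E + eta%:E * ((half1 x)%:E + (half2 x)%:E))).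
  by apply: eq_integral => x _; rewrite udp_stepE -[_ + (half2 x)%:E]EFinD -EFinM -EFinD.
rewrite integralD//; last 2 first.
- exact: finite_measure_integrable_cst.
- by apply: integrableZl => //; exact: integrableD.
rewrite integral_cst//= probability_setT mule1 integralZl//; last exact: integrableD.
rewrite integralD//.
rewrite (integral_mul_perturbed_indep malpha mbeta mx1 alpha_beta_x1 w
  mclamp clamp01_ge0 Ealpha mclamp clamp01_itv Ebeta ix1 Ex1).
rewrite (integral_mul_perturbed_indep malpha mgamma mx2 alpha_gamma_x2 w
  monem_clamp onem_clamp0 Eonem_alpha mclamp clamp01_itv Egamma ix2 Ex2).
by rewrite -!EFinD; congr EFin; field.
Qed.

End udp_step_mean.

Theorem theorem1 (R : realType) (d : measure_display) (T : measurableType d)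
  (P : probability T R)
  (alpha beta gamma x1 x2 : {RV P >-> R})
  (mu1 mu2 eta w : R) :
  (* class-conditional samples: means mu1 < mu2, integrable *)
  P.-integrable setT (EFin \o x1) -> P.-integrable setT (EFin \o x2) ->
  ('E_P[x1] = mu1%:E)%E -> ('E_P[x2] = mu2%:E)%E -> mu1 < mu2 ->
  (* linear separability of the data distribution *)
  (exists t : R, {ae P, forall s, x1 s < t /\ t < x2 s}) ->
  (* perturbation weights in (0,1) with mean 1/2 *)
  {ae P, forall s, 0 < beta s < 1} -> {ae P, forall s, 0 < gamma s < 1} ->
  ('E_P[beta] = (1 / 2)%:E)%E -> ('E_P[gamma] = (1 / 2)%:E)%E ->
  (* oracle weight alpha ~ U(0,1) *)
  (forall A : set R, measurable A ->
     distribution P alpha A = @uniform_prob R 0 1 ltr01 A) ->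
  (* mutual independence of alpha, beta, gamma, x1, x2 *)
  mutually_independent P
    (fun i : 'I_5 => nth (alpha : T -> R)
       [:: (alpha : T -> R); (beta : T -> R); (gamma : T -> R);
           (x1 : T -> R); (x2 : T -> R)] i) ->
  (* fixed step size *)
  0 < eta < 1 ->
  (* conditional on omega_n = w, E[omega_{n+1}] lies on the segment
     between w and omega* = (mu1 + mu2)/2 *)
  exists lambda : R, 0 <= lambda <= 1 /\
    ('E_P[fun s => udp_step eta w (alpha s) (beta s) (gamma s) (x1 s) (x2 s)]
      = ((1 - lambda) * w + lambda * ((mu1 + mu2) / 2))%:E)%E.
Proof.
move=> ix1 ix2 + + _ _ beta01 gamma01 + + alpha_unif indep /andP[eta0 eta1].
rewrite !expectation_def => Ex1 Ex2 Ebeta Egamma.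
exists (eta / 2); split; first by apply/andP; split; lra.
have ae_ltW (Y : T -> R) : {ae P, forall s, 0 < Y s < 1} ->
    {ae P, forall s, 0 <= Y s <= 1}.
  by apply: filterS => s /andP[Y0 Y1]; rewrite !ltW.
have Eclamp_beta : (\int[P]_x (clamp01 (beta x))%:E = (1 / 2)%:E)%E.
  by rewrite integral_clamp01_ae//; exact: ae_ltW.
have Eclamp_gamma : (\int[P]_x (clamp01 (gamma x))%:E = (1 / 2)%:E)%E.
  by rewrite integral_clamp01_ae//; exact: ae_ltW.
have alpha_beta_x1 := mutually_independent3 indep
  (i := Ordinal (isT : 0 < 5)%N) (j := Ordinal (isT : 1 < 5)%N)
  (k := Ordinal (isT : 3 < 5)%N) isT isT isT.
have alpha_gamma_x2 := mutually_independent3 indep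
  (i := Ordinal (isT : 0 < 5)%N) (j := Ordinal (isT : 2 < 5)%N)
  (k := Ordinal (isT : 4 < 5)%N) isT isT isT.
rewrite unlock -(integral_udp_step_clamp01 eta w _ _ _ _ _ alpha_beta_x1
  alpha_gamma_x2 ix1 ix2 Ex1 Ex2 (integral_clamp01_uniform01 alpha_unif)
  Eclamp_beta Eclamp_gamma)//.
apply: ae_eq_integral => //.
- by apply/measurable_EFinP; exact: measurable_udp_step.
- apply/measurable_EFinP; apply: measurable_udp_step => //;
    exact: measurableT_comp (@measurable_clamp01 R) _.
- apply: filterS3 (uniform01_ae alpha_unif) (ae_ltW _ beta01) (ae_ltW _ gamma01).
  by move=> s a01 b01 c01 _; rewrite !clamp01_id.
Qed.
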